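(* Let $K$ be a finite field, $n\ge 1$, and let $P=(p_1,\ldots,p_n)$ and $Q=(q_1,\ldots,q_n)$ be two distinct points of $K^n$. Let $I=I(\{P,Q\})\subseteq K[x_1,\ldots,x_n]$ be the ideal of these two points. Then the number $N^2_n$ of distinct reduced Gröbner bases of $I$, taken over all monomial orders, is $$N^2_n = n-\sum_{i=1}^n B_0(p_i-q_i),$$ where $B_0(x)=1$ if $x=0$ and $B_0(x)=0$ if $x\neq 0$. Equivalently, $N^2_n$ equals the number of coordinates $i$ with $p_i\neq q_i$.
   Context: For a finite set $S\subseteq K^n$, the ideal of points is $I(S)=\{h\in K[x_1,\ldots,x_n] : h(s)=0 \text{ for all } s\in S\}$. A monomial order is a total well-order on monomials compatible with multiplication. A Gröbner basis $G$ of $I$ with respect to $\prec$ is reduced if every leading coefficient is $1$ and no leading term of an element of $G$ divides any term of another element of $G$; each monomial order gives exactly one reduced Gröbner basis, and the number of reduced Gröbner bases of $I$ means the number of distinct such sets as $\prec$ ranges over all monomial orders. *)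

From HB Require Import structures.
From mathcomp Require Import all_boot all_order all_algebra.
From mathcomp Require Import finmap.
From mathcomp Require Export mpoly.
Set Implicit Arguments. Unset Strict Implicit. Unset Printing Implicit Defensive.
Import GRing.Theory.
Local Open Scope ring_scope.

Section Defs.
Variables (K : fieldType) (n : nat).

Definition monomial_order (le : rel 'X_{1..n}) : Prop :=
  [/\ reflexive le, antisymmetric le, transitive le & total le]
  /\ well_founded (fun a b => le a b && (a != b))
  /\ (forall m1 m2 m3 : 'X_{1..n}, le m1 m2 -> le (m1 + m3)%MM (m2 + m3)%MM).

Definition is_lead_mon (le : rel 'X_{1..n}) (p : {mpoly K[n]}) (m : 'X_{1..n}) : Prop :=
  m \in msupp p /\ forall m', m' \in msupp p -> le m' m.

Definition ideal_of_points (S : ('I_n -> K) -> Prop) (h : {mpoly K[n]}) : Prop :=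
  forall s, S s -> h.@[s] = 0.

Definition is_reduced_groebner_basis (le : rel 'X_{1..n})
    (I : {mpoly K[n]} -> Prop) (G : {fset {mpoly K[n]}}) : Prop :=
  [/\
      forall g, g \in G -> I g,
      (* Groebner basis: leading monomials of G generate the leading ideal of I *)
      forall f, I f -> f != 0 ->
        exists2 g, g \in G & exists mg mf,
          [/\ is_lead_mon le g mg, is_lead_mon le f mf & (mg <= mf)%MM],
      forall g, g \in G -> exists mg, is_lead_mon le g mg /\ g@_mg = 1 &
      forall g g', g \in G -> g' \in G -> g != g' ->
        forall mg, is_lead_mon le g mg ->
        forall m, m \in msupp g' -> ~~ (mg <= m)%MM].

End Defs.

Definition B0 (K : fieldType) (x : K) : nat := if x == 0 then 1%N else 0%N.

From HB Require Import structures.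
From mathcomp Require Import all_boot all_order all_algebra.
From mathcomp Require Import finmap.
From mathcomp Require Import mpoly.
From mathcomp Require Import fingroup perm.
From mathcomp Require Import ring.
From Stdlib Require Import Wellfounded FunctionalExtensionality.

(* Fix a monomial order and let x_k be the least variable among those on
   which P and Q differ.  Then, with c_i = (p_i - q_i) / (p_k - q_k),
     (x_k - p_k)(x_k - q_k)   and   x_i - c_i x_k - (p_i - c_i p_k)  (i <> k)
   is the reduced Groebner basis of I({P, Q}): these polynomials vanish on P
   and Q, and no element of the ideal has leading monomial 1 or x_k, because
   every monomial smaller than x_k other than x_k itself avoids the separating
   variables and so takes the same value at P and Q.  Reduced bases are unique
   for a given order, and each separating x_k is the least variable of some
   (permuted degree-lexicographic) order, so the reduced bases are in
   bijection with the coordinates where P and Q differ. *)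

Set Implicit Arguments. Unset Strict Implicit. Unset Printing Implicit Defensive.
Import Order.TTheory GRing.Theory.
Local Open Scope ring_scope.

Lemma total_seq_least (T : eqType) (r : rel T) (s : seq T) :
  transitive r -> total r -> s != [::] ->
  exists2 x, x \in s & {in s, forall y, r x y}.
Proof.
move=> r_trans r_total; have r_refl x : r x x by case/orP: (r_total x x).
elim: s => [//|x s IHs] _; have [->|/IHs [y ys Hy]] := eqVneq s [::].
  by exists x; rewrite ?mem_head // => y /[1!inE] /eqP ->.
have [rxy|ryx] := orP (r_total x y).
  exists x; rewrite ?mem_head // => z /[1!inE] /predU1P [->//|/Hy]; exact: r_trans.
by exists y; rewrite ?inE ?ys ?orbT // => z /[1!inE] /predU1P [->|/Hy].
Qed.

Section MonomialOrder.
Variables (n : nat) (le : rel 'X_{1..n}).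
Hypothesis le_mo : monomial_order le.

Lemma mo_refl : reflexive le. Proof. by case: le_mo => [[]]. Qed.
Lemma mo_anti m1 m2 : le m1 m2 -> le m2 m1 -> m1 = m2.
Proof. by case: le_mo => [[_ anti _ _] _] h1 h2; apply: anti; rewrite h1 h2. Qed.
Lemma mo_trans : transitive le. Proof. by case: le_mo => [[]]. Qed.
Lemma mo_total : total le. Proof. by case: le_mo => [[]]. Qed.
Lemma mo_leD m1 m2 m : le m1 m2 -> le (m1 + m)%MM (m2 + m)%MM.
Proof. by case: le_mo => [_ [_]]; apply. Qed.

(* If [m < 0] then [0 > m > m + m > ...] would descend forever. *)
Lemma mo_ge0 m : le 0%MM m.
Proof.
have [//|nle_0m] := boolP (le 0%MM m).
have le_m0 : le m 0%MM by move: (mo_total 0%MM m); rewrite (negbTE nle_0m).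
have m_neq0 : m != 0%MM by apply: contraNneq nle_0m => ->; apply: mo_refl.
case: le_mo => [_ [wf _]]; elim: (wf 0%MM) => a _ IH; apply: (IH (a + m)%MM).
apply/andP; split; first by have := mo_leD a le_m0; rewrite addmC add0m addmC.
by rewrite -[X in _ != X]addm0 eqm_add2l.
Qed.

Lemma mo_lem m1 m2 : (m1 <= m2)%MM -> le m1 m2.
Proof. by move=> /submK <-; have := mo_leD m1 (mo_ge0 (m2 - m1)%MM); rewrite add0m. Qed.

Lemma mo_exists_least (T : eqType) (f : T -> 'X_{1..n}) (s : seq T) :
  s != [::] -> exists2 x, x \in s & {in s, forall y, le (f x) (f y)}.
Proof.
apply: total_seq_least => [y x z|x y]; [exact: mo_trans | exact: mo_total].
Qed.

Variable K : fieldType.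
Implicit Types (p : {mpoly K[n]}).

Lemma lead_mon_uniq p m1 m2 : is_lead_mon le p m1 -> is_lead_mon le p m2 -> m1 = m2.
Proof. by case=> h1 H1 [h2 H2]; apply: mo_anti; [apply: H2 | apply: H1]. Qed.

Lemma lead_mon_exists p : p != 0 -> exists m, is_lead_mon le p m.
Proof.
rewrite -msupp_eq0 => /(total_seq_least (r := fun x y => le y x)) [||m ms Hm].
- by move=> y x z /= hxy hzy; apply: mo_trans hzy hxy.
- by move=> x y; rewrite orbC mo_total.
by exists m.
Qed.

Lemma lead_mon_neq0 p m : is_lead_mon le p m -> p != 0.
Proof. by case=> + _; apply: contraTneq => ->; rewrite msupp0. Qed.

End MonomialOrder.

Section ReducedGroebnerUniq.
Variables (K : fieldType) (n : nat) (le : rel 'X_{1..n}) (I : {mpoly K[n]} -> Prop).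
Hypothesis le_mo : monomial_order le.
Hypothesis I_subr : forall f g, I f -> I g -> I (f - g).

Local Notation rgb := (is_reduced_groebner_basis le I).

Lemma rgb_lead_coef G g mg : rgb G -> g \in G -> is_lead_mon le g mg -> g@_mg = 1.
Proof.
by case=> _ _ monic _ gG hmg; have [m [/(lead_mon_uniq le_mo hmg) ->]] := monic g gG.
Qed.

Lemma rgb_lead_dvd_supp G g g' mg m : rgb G -> g \in G -> g' \in G ->
  is_lead_mon le g mg -> m \in msupp g' -> (mg <= m)%MM -> g = g'.
Proof.
case=> _ _ _ red gG g'G hmg m_g' dvd.
by apply/eqP; apply: contraTT dvd => ne; apply: red _ _ gG g'G ne _ hmg _ m_g'.
Qed.

Lemma rgb_supp_lead G g mg f mf : rgb G -> g \in G -> is_lead_mon le g mg ->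
  I f -> is_lead_mon le f mf -> mf \in msupp g -> mf = mg.
Proof.
move=> rgbG gG hmg If hmf mf_g; have [_ groeb _ _] := rgbG.
have [g3 g3G [m3 [mf' [hm3 /(lead_mon_uniq le_mo hmf) <- dvd]]]] :=
  groeb f If (lead_mon_neq0 hmf).
have eg3 := rgb_lead_dvd_supp rgbG g3G gG hm3 mf_g dvd.
rewrite eg3 in hm3; rewrite (lead_mon_uniq le_mo hm3 hmg) in dvd.
apply: (mo_anti le_mo) (mo_lem le_mo dvd); by case: hmg => _; apply.
Qed.

Lemma rgb_same_lead G1 G2 g mg : rgb G1 -> rgb G2 -> g \in G1 ->
  is_lead_mon le g mg -> exists2 g', g' \in G2 & is_lead_mon le g' mg.
Proof.
move=> rgb1 rgb2 gG1 hmg.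
have [[I1 groeb1 _ _] [I2 groeb2 _ _]] := (rgb1, rgb2).
have [g' g'G2 [mg' [mf [hmg' /(lead_mon_uniq le_mo hmg) <- dvd']]]] :=
  groeb2 g (I1 g gG1) (lead_mon_neq0 hmg).
have [g'' g''G1 [mg'' [mf' [hmg'' /(lead_mon_uniq le_mo hmg') <- dvd'']]]] :=
  groeb1 g' (I2 g' g'G2) (lead_mon_neq0 hmg').
have mg_g : mg \in msupp g by case: hmg.
have eg'' := rgb_lead_dvd_supp rgb1 g''G1 gG1 hmg'' mg_g (lepm_trans dvd'' dvd').
rewrite eg'' in hmg''; rewrite (lead_mon_uniq le_mo hmg'' hmg) in dvd''.
exists g' => //; suff <- : mg' = mg by [].
by apply: (mo_anti le_mo); apply: (mo_lem le_mo).
Qed.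

(* [g] and [g'] are monic with the same leading monomial, which therefore
   cancels in [g - g'] \in I; every other monomial of [g] or [g'] is not the
   leading monomial of an element of [I], so [g - g'] has none: it is 0. *)
Lemma rgb_sub G1 G2 : rgb G1 -> rgb G2 -> {subset G1 <= G2}.
Proof.
move=> rgb1 rgb2 g gG1; have [[I1 _ monic1 _] [I2 _ _ _]] := (rgb1, rgb2).
have [mg [hmg _]] := monic1 g gG1.
have [g' g'G2 hmg'] := rgb_same_lead rgb1 rgb2 gG1 hmg.
have [/eqP|ne] := eqVneq (g - g') 0; first by rewrite subr_eq0 => /eqP ->.
have [mf hmf] := lead_mon_exists le_mo ne.
have Isub := I_subr (I1 g gG1) (I2 g' g'G2).
have mf_eq : mf = mg.
  case: (hmf) => /msuppB_le; rewrite mem_cat => /orP [] mf_supp _.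
    exact: rgb_supp_lead rgb1 gG1 hmg Isub hmf mf_supp.
  exact: rgb_supp_lead rgb2 g'G2 hmg' Isub hmf mf_supp.
case: hmf => + _; rewrite mf_eq mcoeff_msupp mcoeffB.
by rewrite (rgb_lead_coef rgb1 gG1 hmg) (rgb_lead_coef rgb2 g'G2 hmg') subrr eqxx.
Qed.

Lemma rgb_uniq G1 G2 : rgb G1 -> rgb G2 -> G1 = G2.
Proof. by move=> rgb1 rgb2; apply/fsetP => g; apply/idP/idP; apply: rgb_sub. Qed.

End ReducedGroebnerUniq.

Lemma meval_split (K : fieldType) (n : nat) (f : {mpoly K[n]}) v m0 :
  f.@[v] = f@_m0 * 'X_[m0].@[v] + \sum_(m <- msupp f | m != m0) f@_m * 'X_[m].@[v].
Proof.
rewrite mevalE mevalX; under [X in _ + X]eq_bigr do rewrite mevalX.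
have [m0_f|m0_nf] := boolP (m0 \in msupp f).
  by rewrite (bigD1_seq _ m0_f (msupp_uniq f)).
move: (m0_nf); rewrite -mcoeff_eq0 => /eqP ->; rewrite mul0r add0r.
rewrite [RHS]big_seq_cond [LHS]big_seq; apply: eq_bigl => m.
by have [->|_] := eqVneq m m0; rewrite ?andbT ?andbF ?(negbTE m0_nf).
Qed.

Section TwoPointBasis.
Variables (K : fieldType) (n : nat) (P Q : 'I_n -> K) (k : 'I_n).

Definition slope (i : 'I_n) : K := (P i - Q i) / (P k - Q k).

Definition line_poly (i : 'I_n) : {mpoly K[n]} :=
  'X_i - slope i *: 'X_k - (P i - slope i * P k)%:MP.

Definition quad_poly : {mpoly K[n]} := ('X_k - (P k)%:MP) * ('X_k - (Q k)%:MP).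

Definition two_point_basis : {fset {mpoly K[n]}} :=
  (quad_poly |` [fset line_poly i | i in [seq j <- enum 'I_n | j != k]])%fset.

Lemma two_point_basisP g : g \in two_point_basis <->
  g = quad_poly \/ exists2 i, i != k & g = line_poly i.
Proof.
rewrite in_fset1U; split.
  case/orP => [/eqP ->|/imfsetP [i /=]]; first by left.
  by rewrite mem_filter => /andP [ik _] ->; right; exists i.
case=> [->|[i ik ->]]; first by rewrite eqxx.
by apply/orP; right; apply/imfsetP; exists i; rewrite //= mem_filter ik mem_enum.
Qed.

Lemma quad_polyE :
  quad_poly = 'X_[(mnm1 k *+ 2)%MM] - (P k + Q k) *: 'X_k + (P k * Q k)%:MP.
Proof. by rewrite /quad_poly -mpolyXn -!mul_mpolyC mpolyCD mpolyCM; ring. Qed.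

Lemma line_poly_coef i m : (line_poly i)@_m =
  (mnm1 i == m)%:R - slope i * (mnm1 k == m)%:R - (P i - slope i * P k) * (m == 0%MM)%:R.
Proof. by rewrite /line_poly !mcoeffB mcoeffZ !mcoeffX mcoeffC. Qed.

Lemma quad_poly_coef m : quad_poly@_m = ((mnm1 k *+ 2)%MM == m)%:R
  - (P k + Q k) * (mnm1 k == m)%:R + P k * Q k * (m == 0%MM)%:R.
Proof. by rewrite quad_polyE mcoeffD mcoeffB mcoeffZ !mcoeffX mcoeffC. Qed.

Lemma line_poly_supp i m : m \in msupp (line_poly i) ->
  [\/ m = mnm1 i, m = mnm1 k /\ slope i != 0 | m = 0%MM].
Proof.
rewrite mcoeff_msupp line_poly_coef.
have [->|_] := eqVneq (mnm1 i) m; first by constructor 1.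
have [->|_] := eqVneq m 0%MM; first by constructor 3.
have [<-|_] := eqVneq (mnm1 k) m; last by rewrite !mulr0 !subr0 eqxx.
by rewrite !mulr0 sub0r subr0 oppr_eq0 mulr1; constructor 2.
Qed.

Lemma quad_poly_supp m : m \in msupp quad_poly ->
  [\/ m = (mnm1 k *+ 2)%MM, m = mnm1 k | m = 0%MM].
Proof.
rewrite mcoeff_msupp quad_poly_coef.
have [->|_] := eqVneq (mnm1 k *+ 2)%MM m; first by constructor 1.
have [->|_] := eqVneq m 0%MM; first by constructor 3.
have [<-|_] := eqVneq (mnm1 k) m; last by rewrite !mulr0 subr0 addr0 eqxx.
by constructor 2.
Qed.

Lemma mnm1M2_neq_mnm1 (i : 'I_n) : (mnm1 k *+ 2 == mnm1 i)%MM = false.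
Proof. by apply/eqP => /(congr1 mdeg); rewrite mdegMn !mdeg1. Qed.

Lemma mnm1M2_neq0 : (mnm1 k *+ 2 == 0)%MM = false.
Proof. by apply/eqP => /(congr1 mdeg); rewrite mdegMn mdeg1 mdeg0. Qed.

Lemma line_poly_coef_lead i : i != k -> (line_poly i)@_(mnm1 i) = 1.
Proof.
move=> ik; rewrite line_poly_coef eqxx eq_mnm1 eq_sym (negbTE ik) mnm1_eq0.
by rewrite !mulr0 !subr0.
Qed.

Lemma quad_poly_coef_lead : quad_poly@_(mnm1 k *+ 2) = 1.
Proof.
by rewrite quad_poly_coef eqxx eq_sym mnm1M2_neq_mnm1 mnm1M2_neq0 !mulr0 subr0 addr0.
Qed.

Lemma quad_poly_vanish : quad_poly.@[P] = 0 /\ quad_poly.@[Q] = 0.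
Proof. by rewrite !mevalM !mevalB !mevalXU !mevalC !subrr mulr0 mul0r. Qed.

Hypothesis hk : P k != Q k.

Lemma line_poly_vanish i : (line_poly i).@[P] = 0 /\ (line_poly i).@[Q] = 0.
Proof.
rewrite !mevalB !mevalZ !mevalXU !mevalC; split; first by ring.
have slopeE : slope i * (P k - Q k) = P i - Q i by rewrite /slope divfK // subr_eq0.
by rewrite -[Q i](subKr (P i)) -slopeE; ring.
Qed.

Variable le : rel 'X_{1..n}.
Hypothesis le_mo : monomial_order le.
Hypothesis k_least : forall i, P i != Q i -> le (mnm1 k) (mnm1 i).

Local Notation I := (ideal_of_points (fun s => s = P \/ s = Q)).

Lemma line_poly_lead i : i != k -> is_lead_mon le (line_poly i) (mnm1 i).
Proof.
move=> ik; split; first by rewrite mcoeff_msupp line_poly_coef_lead ?oner_neq0.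
move=> m /line_poly_supp [->|[-> slope_neq0]|->].
- exact: (mo_refl le_mo).
- by apply: k_least; apply: contraNneq slope_neq0 => ePQ; rewrite /slope ePQ subrr mul0r.
- exact: (mo_ge0 le_mo).
Qed.

Lemma quad_poly_lead : is_lead_mon le quad_poly (mnm1 k *+ 2)%MM.
Proof.
split; first by rewrite mcoeff_msupp quad_poly_coef_lead oner_neq0.
move=> m /quad_poly_supp [->|->|->].
- exact: (mo_refl le_mo).
- by apply: (mo_lem le_mo); rewrite mulmS mulm1n lem_addr.
- exact: (mo_ge0 le_mo).
Qed.

(* A monomial below [x_k] other than [x_k] avoids every variable on which
   [P] and [Q] differ, so it cannot separate the two points. *)
Lemma meval_X_below m : le m (mnm1 k) -> m != mnm1 k -> 'X_[m].@[P] = 'X_[m].@[Q].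
Proof.
move=> le_mk m_neq; rewrite !mevalX; apply: eq_bigr => i _.
have [-> //|PQi] := eqVneq (P i) (Q i).
suff -> : m i = 0%N by rewrite !expr0.
apply/eqP; apply: contraNT m_neq; rewrite -lep1mP => /(mo_lem le_mo) le_im.
have le_ik := mo_trans le_mo le_im le_mk.
have -> : m = mnm1 i.
  by apply: (mo_anti le_mo) => //; apply: (mo_trans le_mo) le_mk (k_least PQi).
by apply/eqP/(mo_anti le_mo) => //; apply: k_least.
Qed.

Lemma ideal_coef_below f : I f -> {in msupp f, forall m, le m (mnm1 k)} ->
  f@_(mnm1 k) = 0.
Proof.
move=> If f_below.
have [fP fQ] : f.@[P] = 0 /\ f.@[Q] = 0 by split; apply: If; [left|right].
have : f.@[P] - f.@[Q] = f@_(mnm1 k) * (P k - Q k).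
  rewrite !(meval_split f _ (mnm1 k)) !mevalXU big_seq_cond.
  under eq_bigr => m /andP [mf m_neq] do rewrite (meval_X_below (f_below m mf) m_neq).
  by rewrite -big_seq_cond; ring.
by rewrite fP fQ subrr => /esym /eqP;
  rewrite mulf_eq0 subr_eq0 (negbTE hk) orbF => /eqP.
Qed.

Lemma ideal_lead_neqU f mf : I f -> is_lead_mon le f mf -> mf != mnm1 k.
Proof.
move=> If [mf_f f_le]; apply: contraTneq mf_f => mfE.
by rewrite mfE mcoeff_msupp ideal_coef_below ?eqxx // => m /f_le; rewrite mfE.
Qed.

Lemma ideal_lead_neq0 f mf : I f -> is_lead_mon le f mf -> mf != 0%MM.
Proof.
move=> If [mf_f f_le]; apply: contraTneq mf_f => mf0.
have supp0 m : m \in msupp f -> m = 0%MM.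
  by move=> /f_le; rewrite mf0 => le_m0; apply: (mo_anti le_mo) le_m0 (mo_ge0 le_mo m).
rewrite mf0 mcoeff_msupp negbK.
have := If P (or_introl erefl); rewrite (meval_split f _ 0%MM) big_seq_cond big1.
  by rewrite addr0 mpolyX0 meval1 mulr1 => ->.
by move=> m /andP [/supp0 ->]; rewrite eqxx.
Qed.

Lemma two_point_basis_ideal g : g \in two_point_basis -> I g.
Proof.
move=> /two_point_basisP [->|[i _ ->]] s [->|->].
- by case: quad_poly_vanish.
- by case: quad_poly_vanish.
- by case: (line_poly_vanish i).
- by case: (line_poly_vanish i).
Qed.

Lemma two_point_basis_groebner f : I f -> f != 0 ->
  exists2 g, g \in two_point_basis & exists mg mf,
    [/\ is_lead_mon le g mg, is_lead_mon le f mf & (mg <= mf)%MM].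
Proof.
move=> If f_neq0; have [mf hmf] := lead_mon_exists le_mo f_neq0.
have [j /andP [jk mfj]|mf_on_k] := pickP (fun j => (j != k) && (mf j != 0%N)).
  exists (line_poly j); first by apply/two_point_basisP; right; exists j.
  by exists (mnm1 j), mf; rewrite lep1mP; split => //; apply: line_poly_lead.
have mfE : mf = (mnm1 k *+ mf k)%MM.
  apply/mnmP => i; rewrite mulmnE mnm1E.
  have [<-|ki] := eqVneq k i; first by rewrite mul1n.
  by move: (mf_on_k i); rewrite eq_sym ki /= => /negbFE /eqP.
have mfk_ge2 : (2 <= mf k)%N.
  case: (mf k) mfE => [|[|//]] mfE.
  - by move: (ideal_lead_neq0 If hmf); rewrite mfE mulm0n eqxx.
  - by move: (ideal_lead_neqU If hmf); rewrite mfE mulm1n eqxx.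
exists quad_poly; first by apply/two_point_basisP; left.
exists (mnm1 k *+ 2)%MM, mf; split => //; first exact: quad_poly_lead.
by rewrite mfE; apply/mnm_lepP => i; rewrite !mulmnE leq_mul2l mfk_ge2 orbT.
Qed.

Lemma two_point_basis_monic g : g \in two_point_basis ->
  exists mg, is_lead_mon le g mg /\ g@_mg = 1.
Proof.
case/two_point_basisP => [->|[i ik ->]].
  exists (mnm1 k *+ 2)%MM; rewrite quad_poly_coef_lead.
  by split => //; apply: quad_poly_lead.
by exists (mnm1 i); rewrite line_poly_coef_lead //; split => //; apply: line_poly_lead.
Qed.

Lemma two_point_basis_reduced g g' :
  g \in two_point_basis -> g' \in two_point_basis -> g != g' ->
  forall mg, is_lead_mon le g mg ->
  forall m, m \in msupp g' -> ~~ (mg <= m)%MM.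
Proof.
move=> /two_point_basisP [->|[a ak ->]] /two_point_basisP g'B ne mg hmg m m_g'.
  rewrite (lead_mon_uniq le_mo hmg quad_poly_lead).
  case: g'B ne m_g' => [->|[b _ ->]]; first by rewrite eqxx.
  move=> _ /line_poly_supp supp; apply/negP => /mnm_lepP /(_ k).
  rewrite mulmnE mnm1E eqxx.
  by case: supp => [->|[-> _]|->]; rewrite ?mnm1E ?mnm0E ?eqxx //; case: (b == k).
rewrite (lead_mon_uniq le_mo hmg (line_poly_lead ak)) lep1mP negbK.
have ka : (k == a) = false by rewrite eq_sym (negbTE ak).
case: g'B ne m_g' => [-> _ /quad_poly_supp|[b _ -> ne] /line_poly_supp].
  by case=> ->; rewrite ?mulmnE ?mnm1E ?mnm0E ?ka.
have ba : (b == a) = false by apply: contraNF ne => /eqP ->.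
by case=> [->|[-> _]|->]; rewrite ?mnm1E ?mnm0E ?ka ?ba.
Qed.

Lemma two_point_basis_rgb : is_reduced_groebner_basis le I two_point_basis.
Proof.
split; [exact: two_point_basis_ideal | exact: two_point_basis_groebner |
        exact: two_point_basis_monic | exact: two_point_basis_reduced].
Qed.

End TwoPointBasis.

Section PermutedDeglex.
Variables (n : nat) (s : 'S_n).

Definition mperm (m : 'X_{1..n}) : 'X_{1..n} := [multinom m (s i) | i < n].

Lemma mpermD m1 m2 : mperm (m1 + m2)%MM = (mperm m1 + mperm m2)%MM.
Proof. by apply/mnmP => i; rewrite !mnmE. Qed.

Lemma mperm_inj : injective mperm.
Proof.
by move=> m1 m2 /mnmP e; apply/mnmP => i; move: (e (s^-1 i)%g); rewrite !mnmE permKV.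
Qed.

Lemma mperm_mnm1 i : mperm (mnm1 i) = mnm1 ((s^-1)%g i).
Proof. by apply/mnmP => j; rewrite !mnmE -(inj_eq (@perm_inj _ s^-1%g)) permK. Qed.

Definition perm_deglex : rel 'X_{1..n} := fun m1 m2 => (mperm m1 <= mperm m2)%O.

Lemma perm_deglex_mo : monomial_order perm_deglex.
Proof.
split; [split|split].
- by move=> m; apply: lexx.
- by move=> m1 m2 /le_anti /mperm_inj.
- by move=> m2 m1 m3; apply: le_trans.
- by move=> m1 m2; apply: le_total.
- apply: (@wf_incl _ _ (fun a b => mperm a < mperm b)%O); last first.
    exact: (wf_inverse_image _ _ _ _ (@ltom_wf n)).
  by move=> a b /andP [le_ab ne_ab]; rewrite lt_neqAle (inj_eq mperm_inj) ne_ab.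
- by move=> m1 m2 m3; rewrite /perm_deglex !mpermD lemc_add2l.
Qed.

End PermutedDeglex.

Lemma deglex_mnm1_max n (j : 'I_n.+1) : (mnm1 ord_max <= mnm1 j :> 'X_{1..n.+1})%O.
Proof.
have [->|jn] := eqVneq j ord_max; first exact: lexx.
apply/ltW/ltmcP; first by rewrite !mdeg1.
exists j; last by rewrite !mnm1E eqxx eq_sym (negbTE jn).
move=> j' lt_j'j; rewrite !mnm1E; have [e|_] := eqVneq ord_max j'.
  by move: lt_j'j; rewrite -e ltnNge -ltnS ltn_ord.
by have [e|//] := eqVneq j j'; move: lt_j'j; rewrite e ltnn.
Qed.

Lemma exists_mo_least_var n (k : 'I_n) :
  exists le, monomial_order le /\ forall i, le (mnm1 k) (mnm1 i).
Proof.
case: n k => [[] //|n] k; exists (perm_deglex (tperm k ord_max)).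
split => [|i]; first exact: perm_deglex_mo.
by rewrite /perm_deglex !mperm_mnm1 tpermV tpermL deglex_mnm1_max.
Qed.

Lemma two_point_basis_inj (K : fieldType) n (P Q : 'I_n -> K) :
  injective (two_point_basis P Q).
Proof.
move=> k1 k2 eB; have : quad_poly P Q k1 \in two_point_basis P Q k2.
  by rewrite -eB; apply/two_point_basisP; left.
have lead1 : (mnm1 k1 *+ 2)%MM \in msupp (quad_poly P Q k1).
  by rewrite mcoeff_msupp quad_poly_coef_lead oner_neq0.
case/two_point_basisP => [e|[i _ e]]; rewrite e in lead1.
  case/quad_poly_supp: lead1 => [/mnmP /(_ k1)|/eqP|/eqP]; last by rewrite mnm1M2_neq0.
    by rewrite !mulmnE !mnm1E eqxx; case: eqP.
  by rewrite mnm1M2_neq_mnm1.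
by case/line_poly_supp: lead1 => [|[]|] /eqP; rewrite ?mnm1M2_neq_mnm1 ?mnm1M2_neq0.
Qed.

Lemma count_neq_sum_B0 (K : fieldType) n (P Q : 'I_n -> K) :
  count (fun i => P i != Q i) (enum 'I_n) = (n - \sum_(i < n) B0 (P i - Q i))%N.
Proof.
have <- : count (fun i => P i == Q i) (enum 'I_n) = \sum_(i < n) B0 (P i - Q i).
  rewrite -sum1_count big_mkcond big_enum /=.
  by apply: eq_bigr => i _; rewrite /B0 subr_eq0.
by rewrite -[X in (X - _)%N](size_enum_ord n) -(count_predC (fun i => P i == Q i)) addKn.
Qed.

Lemma ideal_of_points_subr (K : fieldType) n (S : ('I_n -> K) -> Prop) f g :
  ideal_of_points S f -> ideal_of_points S g -> ideal_of_points S (f - g).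
Proof. by move=> If Ig s Ss; rewrite mevalB If // Ig // subrr. Qed.

Lemma exists_neq_coord (T : finType) (U : eqType) (f g : T -> U) :
  f <> g -> exists i, f i != g i.
Proof.
move=> neq_fg; apply/existsP; apply: contra_notT neq_fg => /existsPn fg_eq.
by apply: functional_extensionality => i; apply/eqP/negPn/fg_eq.
Qed.

Lemma two_points_rgbP (K : fieldType) n (P Q : 'I_n -> K) le G :
  monomial_order le -> P <> Q ->
  is_reduced_groebner_basis le (ideal_of_points (fun s => s = P \/ s = Q)) G ->
  exists2 k, P k != Q k & G = two_point_basis P Q k.
Proof.
move=> le_mo /exists_neq_coord [j PQj] rgbG.
set D := [seq k <- enum 'I_n | P k != Q k].
have inD i : (i \in D) = (P i != Q i) by rewrite mem_filter mem_enum andbT.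
have D_neq0 : D != [::] by apply: contraTneq PQj => D0; rewrite -inD D0.
have [k + k_least] := mo_exists_least le_mo (@mnm1 n) D_neq0; rewrite inD => hk.
exists k => //; apply: (rgb_uniq le_mo (@ideal_of_points_subr _ _ _) rgbG).
by apply: two_point_basis_rgb => // i; rewrite -inD; apply: k_least.
Qed.

Theorem theorem3 (K : finFieldType) (n : nat) (hn : (1 <= n)%N)
    (P Q : 'I_n -> K) (hPQ : P <> Q) :
  exists S : {fset {fset {mpoly K[n]}}},
    (forall G : {fset {mpoly K[n]}},
       G \in S <->
       exists le : rel 'X_{1..n},
         monomial_order le /\
         is_reduced_groebner_basis le
           (ideal_of_points (fun s => s = P \/ s = Q)) G) /\
    #|` S| = (n - \sum_(i < n) B0 (P i - Q i))%N.
Proof.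
set D := [seq k <- enum 'I_n | P k != Q k].
have inD i : (i \in D) = (P i != Q i) by rewrite mem_filter mem_enum andbT.
exists [fset two_point_basis P Q k | k in D]%fset; split => [G|]; last first.
  rewrite card_imfset /=; last exact: two_point_basis_inj.
  rewrite undup_id; last by rewrite filter_uniq // enum_uniq.
  by rewrite size_filter count_neq_sum_B0.
split => [/imfsetP [k /= + ->] | [le [le_mo /two_points_rgbP]]].
  rewrite inD => hk; have [le [le_mo k_least]] := exists_mo_least_var k.
  by exists le; split => //; apply: two_point_basis_rgb => // i _.
by case/(_ le_mo hPQ) => k hk ->; apply/imfsetP; exists k; rewrite ?inD.
Qed.
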